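(* Let $0<p<1/2$, $\delta_1=2\rho(1-\rho)$ and $R_1=\bar R(\delta_1)$. Then \[ -A(\delta_1)-R_1+1-h(\delta_1)=E_0(R_1,p). \]
   Context: Logarithms base 2, $h$ binary entropy, $D(x\|y)=x\log\frac xy+(1-x)\log\frac{1-x}{1-y}$. $\rho=\frac{\sqrt p}{\sqrt p+\sqrt{1-p}}$, $R_{\mathrm{crit}}=1-h(\rho)$, $A(\omega)=\omega\log\big(2\sqrt{p(1-p)}\big)$, and $E_0(R,p)=D(\rho\|p)+R_{\mathrm{crit}}-R$. Further $\tau_\nu(\xi)=\frac12\Big(1-\sqrt{1-4\big(\sqrt{\nu(1-\nu)-\xi(1-\xi)}-\xi\big)^2}\Big)$ and $\bar R(\delta)=1+\min_{\frac12(1-\sqrt{1-2\delta})\le\alpha\le\frac12}\big(h(\tau_\alpha(\delta/2))-h(\alpha)\big)$ (the inverse of the linear programming bound on relative distance). *)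

From Stdlib Require Import Reals.
From Coquelicot Require Import Coquelicot.
Open Scope R_scope.

Definition log2 (x : R) : R := ln x / ln 2.

(* binary entropy (with the convention 0 log 0 = 0, automatic since ln 0 = 0 in Stdlib) *)
Definition h (x : R) : R := - x * log2 x - (1 - x) * log2 (1 - x).

Definition D (x y : R) : R := x * log2 (x / y) + (1 - x) * log2 ((1 - x) / (1 - y)).

Definition rho (p : R) : R := sqrt p / (sqrt p + sqrt (1 - p)).

Definition Rcrit (p : R) : R := 1 - h (rho p).

Definition A (p omega : R) : R := omega * log2 (2 * sqrt (p * (1 - p))).

Definition E0 (R_ p : R) : R := D (rho p) p + Rcrit p - R_.

Definition tau (nu xi : R) : R :=
  / 2 * (1 - sqrt (1 - 4 * (sqrt (nu * (1 - nu) - xi * (1 - xi)) - xi) ^ 2)).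

Definition Rbar_set (delta : R) (y : R) : Prop :=
  exists alpha, / 2 * (1 - sqrt (1 - 2 * delta)) <= alpha <= / 2 /\
                y = h (tau alpha (delta / 2)) - h alpha.

(* Rbar(delta) = 1 + min_{alpha} (h(tau_alpha(delta/2)) - h(alpha));
   the minimum is expressed as the greatest lower bound (the minimum exists). *)
Definition Rbar_lp (delta : R) : R := 1 + real (Glb_Rbar (Rbar_set delta)).

From Stdlib Require Import Reals Lra.
Open Scope R_scope.

(** With [s = sqrt p] and [t = sqrt (1 - p)] we have [s^2 + t^2 = 1],
    [rho = s / (s + t)], [1 - delta1 = 1 / (s + t)^2] and
    [2 sqrt (p (1 - p)) = 2 s t].  Both [h delta1 + A delta1] and
    [h rho - D (rho || p)] then collapse to [2 log2 (s + t)], so the two sides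
    of the identity agree for every [0 < p < 1]; the rate [R1] occurs on both
    sides and cancels. *)

Lemma log2_mult x y : 0 < x -> 0 < y -> log2 (x * y) = log2 x + log2 y.
Proof.
  intros hx hy. unfold log2. rewrite ln_mult by lra.
  field. apply ln_neq_0; lra.
Qed.

Lemma log2_inv x : 0 < x -> log2 (/ x) = - log2 x.
Proof.
  intros hx. unfold log2. rewrite ln_Rinv by lra.
  field. apply ln_neq_0; lra.
Qed.

Lemma log2_div x y : 0 < x -> 0 < y -> log2 (x / y) = log2 x - log2 y.
Proof.
  intros hx hy. unfold Rdiv.
  rewrite log2_mult, log2_inv by (try apply Rinv_0_lt_compat; lra). ring.
Qed.

Lemma h_ratio a b : 0 < a -> 0 < b ->
  h (a / (a + b)) = log2 (a + b) - (a * log2 a + b * log2 b) / (a + b).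
Proof.
  intros ha hb. unfold h.
  replace (1 - a / (a + b)) with (b / (a + b)) by (field; lra).
  rewrite !log2_div by lra.
  field. lra.
Qed.

Section UnitCircle.

Variables s t : R.
Hypothesis hs : 0 < s.
Hypothesis ht : 0 < t.
Hypothesis hst : s * s + t * t = 1.

Lemma D_ratio_sqr :
  D (s / (s + t)) (s * s) = h (s / (s + t)) - 2 * log2 (s + t).
Proof.
  unfold D. replace (1 - s / (s + t)) with (t / (s + t)) by (field; lra).
  replace (1 - s * s) with (t * t) by lra.
  replace (s / (s + t) / (s * s)) with (/ (s * (s + t))) by (field; lra).
  replace (t / (s + t) / (t * t)) with (/ (t * (s + t))) by (field; lra).
  rewrite h_ratio, !log2_inv, !log2_mult by (try apply Rmult_lt_0_compat; lra).
  field. lra.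
Qed.

Lemma h_delta_ratio_add_log2 (r := s / (s + t)) :
  h (2 * r * (1 - r)) + 2 * r * (1 - r) * log2 (2 * (s * t)) = 2 * log2 (s + t).
Proof.
  assert (hdelta : 2 * r * (1 - r) = (2 * (s * t)) / ((s + t) * (s + t)))
    by (unfold r; field; lra).
  assert (hcodelta : 1 - 2 * r * (1 - r) = / ((s + t) * (s + t))).
  { rewrite hdelta. transitivity ((s * s + t * t) / ((s + t) * (s + t))).
    - field. lra.
    - rewrite hst. field. lra. }
  assert (hlog : log2 (2 * r * (1 - r)) = log2 (2 * (s * t)) - 2 * log2 (s + t)).
  { rewrite hdelta, log2_div, (log2_mult (s + t)) by (repeat apply Rmult_lt_0_compat; lra).
    ring. }
  assert (hcolog : log2 (1 - 2 * r * (1 - r)) = - (2 * log2 (s + t))).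
  { rewrite hcodelta, log2_inv, log2_mult by (try apply Rmult_lt_0_compat; lra).
    ring. }
  unfold h. rewrite hlog, hcolog. ring.
Qed.

End UnitCircle.

Theorem lemma16 (p : R) (hp0 : 0 < p) (hp1 : p < / 2) :
  let delta1 := 2 * rho p * (1 - rho p) in
  let R1 := Rbar_lp delta1 in
  - A p delta1 - R1 + 1 - h delta1 = E0 R1 p.
Proof.
  intros delta1 R1.
  set (s := sqrt p). set (t := sqrt (1 - p)).
  assert (hs : 0 < s) by (apply sqrt_lt_R0; lra).
  assert (ht : 0 < t) by (apply sqrt_lt_R0; lra).
  assert (hss : s * s = p) by (apply sqrt_sqrt; lra).
  assert (htt : t * t = 1 - p) by (apply sqrt_sqrt; lra).
  assert (hrho : rho p = s / (s + t)) by reflexivity.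
  assert (hst : sqrt (p * (1 - p)) = s * t) by (apply sqrt_mult; lra).
  pose proof (D_ratio_sqr s t hs ht ltac:(lra)) as hD.
  pose proof (h_delta_ratio_add_log2 s t hs ht ltac:(lra)) as hA; cbv zeta in hA.
  rewrite hss in hD.
  unfold E0, Rcrit, A, delta1. rewrite hst, hrho.
  lra.
Qed.
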